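(* Let $F=\{f_i\}_{i=1}^N$ be a tight frame for $\mathcal H$. Suppose there exist a dual pair $(F',G')\in\mathcal F^{(1)}$ and a constant $c$ with $\operatorname{Re}\big(\langle g'_i,g'_j\rangle\langle f'_j,f'_i\rangle\big)=c$ for all $i\neq j$. Then $(F,S_F^{-1}F)\in\mathcal F^{(m)}$ for every $m\in\{1,2,\dots,N\}$ if and only if $(F,S_F^{-1}F)$ is a $2$-uniform dual pair, and this holds if and only if $F$ is an equiangular frame.
   Context: $\mathcal H$ is a complex Hilbert space of finite dimension $n$, inner product linear in the first argument, $N\ge n$. A finite sequence $F=\{f_i\}_{i=1}^N$ is a frame if there are $0<A\le B$ with $A\|f\|^2\le\sum_i|\langle f,f_i\rangle|^2\le B\|f\|^2$ for all $f$; tight if one can take $A=B$; equal norm if $\|f_i\|$ is constant; equiangular if it is equal norm and $|\langle f_i,f_j\rangle|$ is the same constant for all $i\ne j$. $S_Ff=\sum_i\langle f,f_i\rangle f_i$; $S_F^{-1}F=\{S_F^{-1}f_i\}$ is the canonical dual. $G=\{g_i\}_{i=1}^N$ is a dual of $F$ if $f=\sum_i\langle f,g_i\rangle f_i$ for all $f$; $(F,G)$ is then an $(N,n)$ dual pair. A dual pair is $1$-uniform if $\langle f_i,g_i\rangle$ is independent of $i$, and $2$-uniform if it is $1$-uniform and $\langle f_i,g_j\rangle\langle f_j,g_i\rangle$ is the same constant for all $i\ne j$. $\mathcal A_m$ is the set of $m$-element subsets of $\{1,\dots,N\}$; $E_{\Lambda,F,G}f=\sum_{i\in\Lambda}\langle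 f,f_i\rangle g_i$. With $\|T\|_{\mathcal F}=\sqrt{\operatorname{tr}(T^*T)}$: $\epsilon^{(m)}_{F,G}=\max_{\Lambda\in\mathcal A_m}\|E_{\Lambda,F,G}\|_{\mathcal F}$; $\epsilon^{(1)}=\inf\{\epsilon^{(1)}_{F,G}:(F,G)\text{ an }(N,n)\text{ dual pair}\}$; $\mathcal F^{(1)}=\{(F,G):\epsilon^{(1)}_{F,G}=\epsilon^{(1)}\}$; for $m>1$, $\epsilon^{(m)}=\inf\{\epsilon^{(m)}_{F,G}:(F,G)\in\mathcal F^{(m-1)}\}$, $\mathcal F^{(m)}=\{(F,G)\in\mathcal F^{(m-1)}:\epsilon^{(m)}_{F,G}=\epsilon^{(m)}\}$. *)

From mathcomp Require Import all_boot all_order all_algebra.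
From mathcomp Require Import reals complex.
Set Implicit Arguments. Unset Strict Implicit. Unset Printing Implicit Defensive.
Import Order.TTheory GRing.Theory Num.Theory.
Local Open Scope ring_scope.

Section Frames.
Variables (R : realType) (n N : nat).
Local Notation C := (R[i]).
Local Notation vec := ('cV[C]_n).
Local Notation seqv := ('I_N -> vec).

(* inner product, linear in the first argument *)
Definition inner (f g : vec) : C := \sum_(k < n) f k 0 * Num.conj (g k 0).
Definition vnorm (f : vec) : C := sqrtC (inner f f).

Definition adj p q (M : 'M[C]_(p, q)) : 'M[C]_(q, p) := (map_mx Num.conj M)^T.

Definition is_frame (F : seqv) : Prop :=
  exists A B : C, 0 < A /\ A <= B /\
    forall f : vec, A * vnorm f ^+ 2 <= \sum_i `|inner f (F i)| ^+ 2
                    /\ \sum_i `|inner f (F i)| ^+ 2 <= B * vnorm f ^+ 2.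

Definition tight (F : seqv) : Prop :=
  exists A : C, 0 < A /\
    forall f : vec, A * vnorm f ^+ 2 <= \sum_i `|inner f (F i)| ^+ 2
                    /\ \sum_i `|inner f (F i)| ^+ 2 <= A * vnorm f ^+ 2.

Definition equal_norm (F : seqv) : Prop :=
  exists c : C, forall i, vnorm (F i) = c.

Definition equiangular (F : seqv) : Prop :=
  equal_norm F /\ exists c : C, forall i j, i != j -> `|inner (F i) (F j)| = c.

(* frame operator S_F f = sum_i <f,f_i> f_i, as a matrix *)
Definition frame_op (F : seqv) : 'M[C]_n := \sum_i (F i *m adj (F i)).
Definition canon_dual (F : seqv) : seqv := fun i => invmx (frame_op F) *m F i.

Definition is_dual (F G : seqv) : Prop :=
  forall f : vec, f = \sum_i inner f (G i) *: F i.

Definition dual_pair (F G : seqv) : Prop := is_frame F /\ is_dual F G.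

Definition one_uniform (F G : seqv) : Prop :=
  exists c : C, forall i, inner (F i) (G i) = c.

Definition two_uniform (F G : seqv) : Prop :=
  one_uniform F G /\
  exists c : C, forall i j, i != j -> inner (F i) (G j) * inner (F j) (G i) = c.

(* E_{Lambda,F,G} f = sum_{i in Lambda} <f,f_i> g_i, as a matrix *)
Definition erasure (L : {set 'I_N}) (F G : seqv) : 'M[C]_n :=
  \sum_(i in L) (G i *m adj (F i)).

(* Frobenius norm sqrt(tr(T^* T)); tr(T^* T) is real, so we take its real part *)
Definition frob (T : 'M[C]_n) : R := Num.sqrt (complex.Re (\tr (adj T *m T))).

Definition eps (m : nat) (F G : seqv) : R :=
  \big[Num.max/0]_(L : {set 'I_N} | #|L| == m) frob (erasure L F G).

(* inF m F G <-> (F,G) \in F^(m); F^(0) := all dual pairs, and F^(m) is the set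
   of pairs in F^(m-1) attaining the infimum eps^(m) of eps_m over F^(m-1). *)
Fixpoint inF (m : nat) (F G : seqv) : Prop :=
  match m with
  | 0 => dual_pair F G
  | m'.+1 => inF m' F G /\
      forall F' G' : seqv, inF m' F' G' -> eps m'.+1 F G <= eps m'.+1 F' G'
  end.

End Frames.

(* Write X_ij = <g_j, g_i> <f_i, f_j>, so that the squared Frobenius norm of the
   erasure E_L is the sum of the X_ij over i, j in L.  Since sum_i <f_i, g_i> =
   tr I = n, Cauchy-Schwarz gives eps^(1) >= n/N; harmonic frames attain this
   bound, so F^(1) consists of the dual pairs with ||f_i||^2 ||g_i||^2 = (n/N)^2
   for all i.  For such pairs the diagonal of X is fixed and, because E_{all} = I,
   so is the off-diagonal sum of Re X_ij.  Hence a pair whose Re X_ij is constant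
   off the diagonal minimises eps^(2) (some Re X_ij of any competitor is at least
   that constant), every pair of F^(1) not exceeding it on two-element erasures
   has the same constant, and all such pairs share every eps^(m).  For a tight
   frame with bound a and canonical dual g_i = f_i / a, X_ij = |<f_i, f_j>|^2 / a^2
   = <f_i, g_j> <f_j, g_i> and <f_i, g_i> = ||f_i||^2 / a, which turns this
   constancy into 2-uniformity and into equiangularity. *)

From mathcomp Require Import all_boot all_order all_algebra.
From mathcomp Require Import reals complex.
From mathcomp Require Import ring.
From mathcomp Require Import cyclic separable cyclotomic.
Set Implicit Arguments. Unset Strict Implicit. Unset Printing Implicit Defensive.
Import Order.TTheory GRing.Theory Num.Theory.
Local Open Scope ring_scope.

Section Adjoint.
Variable R : realType.
Local Notation C := R[i].

Lemma adjK p q (A : 'M[C]_(p, q)) : adj (adj A) = A.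
Proof. by apply/matrixP=> i j; rewrite !mxE conjCK. Qed.

Lemma adj_mul p q s (A : 'M[C]_(p, q)) (B : 'M[C]_(q, s)) :
  adj (A *m B) = adj B *m adj A.
Proof. by rewrite /adj map_mxM trmx_mul. Qed.

Lemma adjZ p q a (A : 'M[C]_(p, q)) : adj (a *: A) = a^* *: adj A.
Proof. by apply/matrixP=> i j; rewrite !mxE rmorphM. Qed.

Lemma adj_sum p q (I : finType) (P : pred I) (A : I -> 'M[C]_(p, q)) :
  adj (\sum_(i | P i) A i) = \sum_(i | P i) adj (A i).
Proof.
apply/matrixP=> i j; rewrite !mxE !summxE rmorph_sum.
by apply: eq_bigr => k _; rewrite !mxE.
Qed.

Lemma adj1 p : adj (1%:M : 'M[C]_p) = 1%:M.
Proof.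
by apply/matrixP=> i j; rewrite !mxE eq_sym; case: (i == j); rewrite ?conjC1 ?conjC0.
Qed.

End Adjoint.

Lemma Re_sum (R : realType) (I : finType) (P : pred I) (F : I -> R[i]) :
  complex.Re (\sum_(i | P i) F i) = \sum_(i | P i) complex.Re (F i).
Proof. exact: (raddf_sum (@complex.Re R : Rcomplex R -> R)). Qed.

Lemma Re_conj (R : realType) (x : R[i]) : complex.Re x^* = complex.Re x.
Proof. by case: x. Qed.

Lemma conj_real_complex (R : realType) (x : R) : (x%:C%C : R[i])^* = x%:C%C.
Proof. exact: conjc_real. Qed.

Lemma Re_ge0 (R : realType) (x : R[i]) : 0 <= x -> 0 <= complex.Re x.
Proof. by move=> x_ge0; move: (x_ge0); rewrite -(RRe_real (ger0_real x_ge0)) lecR. Qed.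

Lemma Re_realM (R : realType) (x : R) (z : R[i]) :
  complex.Re (x%:C%C * z) = x * complex.Re z.
Proof. by case: z => u v /=; rewrite mul0r subr0. Qed.

Section InnerProduct.
Variables (R : realType) (n : nat).
Local Notation C := R[i].
Local Notation vec := 'cV[C]_n.

Lemma adj_mul_vec (f g : vec) : adj g *m f = (inner f g)%:M.
Proof.
rewrite [LHS]mx11_scalar !mxE; congr _%:M.
by apply: eq_bigr => k _; rewrite !mxE mulrC.
Qed.

Lemma mxtrace_mul_adj (f g : vec) : \tr (f *m adj g) = inner f g.
Proof. by rewrite mxtrace_mulC adj_mul_vec mxtrace_scalar. Qed.

Lemma conj_inner (f g : vec) : (inner f g)^* = inner g f.
Proof. rewrite rmorph_sum; apply: eq_bigr => k _; by rewrite rmorphM /= conjCK mulrC. Qed.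

Lemma innerDl (f f' g : vec) : inner (f + f') g = inner f g + inner f' g.
Proof. rewrite -big_split; apply: eq_bigr => k _; by rewrite !mxE mulrDl. Qed.

Lemma innerDr (f g g' : vec) : inner f (g + g') = inner f g + inner f g'.
Proof. rewrite -big_split; apply: eq_bigr => k _; by rewrite !mxE rmorphD mulrDr. Qed.

Lemma innerZl a (f g : vec) : inner (a *: f) g = a * inner f g.
Proof. rewrite mulr_sumr; apply: eq_bigr => k _; by rewrite !mxE mulrA. Qed.

Lemma innerZr a (f g : vec) : inner f (a *: g) = a^* * inner f g.
Proof. rewrite mulr_sumr; apply: eq_bigr => k _; by rewrite !mxE rmorphM mulrCA. Qed.

Lemma innerNl (f g : vec) : inner (- f) g = - inner f g.
Proof. by rewrite -scaleN1r innerZl mulN1r. Qed.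

Lemma innerNr (f g : vec) : inner f (- g) = - inner f g.
Proof. by rewrite -scaleN1r innerZr rmorphN1 mulN1r. Qed.

Lemma inner0r (f : vec) : inner f 0 = 0.
Proof. by rewrite -(scale0r 0) innerZr rmorph0 mul0r. Qed.

Lemma inner_suml (I : finType) (P : pred I) (F : I -> vec) g :
  inner (\sum_(i | P i) F i) g = \sum_(i | P i) inner (F i) g.
Proof.
rewrite /inner exchange_big; apply: eq_bigr => k _.
by rewrite summxE mulr_suml.
Qed.

Lemma inner_self (f : vec) : inner f f = \sum_k `|f k 0| ^+ 2.
Proof. by apply: eq_bigr => k _; rewrite normCK. Qed.

Lemma inner_self_ge0 (f : vec) : 0 <= inner f f.
Proof. by rewrite inner_self sumr_ge0 // => k _; rewrite exprn_ge0. Qed.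

Lemma inner_self_eq0 (f : vec) : inner f f = 0 -> f = 0.
Proof.
rewrite inner_self => /eqP; rewrite psumr_eq0 => [/allP f0|k _]; last exact: exprn_ge0.
apply/matrixP=> k j; rewrite ord1 mxE; apply/eqP.
by rewrite -normr_eq0 -sqrf_eq0; apply: implyP (f0 k _) _; rewrite ?mem_index_enum.
Qed.

Definition normsq (f : vec) : R := complex.Re (inner f f).

Lemma inner_selfE (f : vec) : inner f f = (normsq f)%:C%C.
Proof. exact/esym/RRe_real/ger0_real/inner_self_ge0. Qed.

Lemma normsq_ge0 (f : vec) : 0 <= normsq f.
Proof. exact/Re_ge0/inner_self_ge0. Qed.

Lemma Re_inner_sqr_le (f g : vec) : complex.Re (inner f g) ^+ 2 <= normsq f * normsq g.
Proof.
set a := normsq g; set b := complex.Re (inner f g).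
have Re_gf : complex.Re (inner g f) = b by rewrite -conj_inner Re_conj.
have expand : normsq (a%:C%C *: f - b%:C%C *: g) = a * (a * normsq f - b ^+ 2).
  rewrite /normsq innerDl !innerDr !innerNl !innerNr !innerZl !innerZr !conj_real_complex.
  rewrite !raddfD /= !raddfN /= !Re_realM Re_gf -/(normsq f) -/(normsq g) -/a -/b.
  by ring.
have := normsq_ge0 (a%:C%C *: f - b%:C%C *: g); rewrite expand.
have [a_gt0|a_eq0] := boolP (0 < a).
  by rewrite pmulr_rge0 // subr_ge0 mulrC.
have {a_eq0}a0 : a = 0 by apply/eqP; rewrite eq_le normsq_ge0 andbT leNgt.
have g0 : g = 0 by apply: inner_self_eq0; rewrite inner_selfE -/a a0.
by rewrite /b g0 inner0r /= expr0n /= a0 mulr0.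
Qed.

Lemma Re_inner_le (f g : vec) : complex.Re (inner f g) <= Num.sqrt (normsq f * normsq g).
Proof.
have [b_le0|b_gt0] := lerP (complex.Re (inner f g)) 0.
  exact: le_trans b_le0 (sqrtr_ge0 _).
by rewrite -(ger0_norm (ltW b_gt0)) -sqrtr_sqr ler_wsqrtr // Re_inner_sqr_le.
Qed.

Lemma mulmx_col_ext (A B : 'M[C]_n) : (forall f : vec, A *m f = B *m f) -> A = B.
Proof.
move=> AB; apply/matrixP=> i j.
by have := congr1 (fun u : vec => u i 0) (AB (delta_mx j 0)); rewrite -!colE !mxE.
Qed.

Lemma mx_eq0_quadratic (D : 'M[C]_n) : (forall f : vec, inner (D *m f) f = 0) -> D = 0.
Proof.
move=> D0.
have sym_sum f g : inner (D *m f) g + inner (D *m g) f = 0.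
  by have := D0 (f + g); rewrite mulmxDr !innerDl !innerDr !D0 add0r addr0.
(* replacing g by 'i g turns the sum into a difference *)
have sym f g : inner (D *m f) g = inner (D *m g) f.
  have := sym_sum f ('i *: g); rewrite -scalemxAr innerZl innerZr conjCi.
  rewrite mulNr addrC -mulrBr => /eqP; rewrite mulf_eq0 (negbTE (neq0Ci _)) /= subr_eq0.
  by move=> /eqP.
have D0' f g : inner (D *m f) g = 0.
  move/eqP: (sym_sum f g); rewrite -sym -mulr2n -mulr_natl mulf_eq0 pnatr_eq0 /=.
  by move/eqP.
by apply: mulmx_col_ext => f; rewrite mul0mx; apply/inner_self_eq0/D0'.
Qed.

Lemma vnorm_sqr (f : vec) : vnorm f ^+ 2 = inner f f.
Proof. exact: sqrtCK. Qed.
End InnerProduct.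

Section DualPair.
Variables (R : realType) (n N : nat).
Local Notation C := R[i].
Local Notation vec := 'cV[C]_n.
Local Notation seqv := ('I_N -> vec).

Lemma is_dualE (F G : seqv) : is_dual F G <-> \sum_i F i *m adj (G i) = 1%:M.
Proof.
have expand f : (\sum_i F i *m adj (G i)) *m f = \sum_i inner f (G i) *: F i.
  by rewrite mulmx_suml; apply: eq_bigr => i _; rewrite -mulmxA adj_mul_vec mul_mx_scalar.
split=> [FG|FG f]; last by rewrite -expand FG mul1mx.
by apply: mulmx_col_ext => f; rewrite expand mul1mx -FG.
Qed.

Lemma dual_sum_adj (F G : seqv) : is_dual F G -> \sum_i G i *m adj (F i) = 1%:M.
Proof.
move/is_dualE=> FG; rewrite -[LHS]adjK adj_sum -adj1 -FG.
by congr adj; apply: eq_bigr => i _; rewrite adj_mul adjK.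
Qed.

Lemma sum_inner_dual (F G : seqv) : is_dual F G -> \sum_i inner (F i) (G i) = n%:R.
Proof.
move/is_dualE=> FG; rewrite -(mxtrace1 C n) -FG raddf_sum /=.
by apply: eq_bigr => i _; rewrite mxtrace_mul_adj.
Qed.

Lemma sum_Re_inner_dual (F G : seqv) :
  is_dual F G -> \sum_i complex.Re (inner (F i) (G i)) = n%:R.
Proof. by move=> FG; rewrite -Re_sum sum_inner_dual // -(rmorph_nat (real_complex R)). Qed.
End DualPair.

Section ErasureNorm.
Variables (R : realType) (n N : nat).
Local Notation C := R[i].
Local Notation vec := 'cV[C]_n.
Local Notation seqv := ('I_N -> vec).

Definition frobsq (T : 'M[C]_n) : R := complex.Re (\tr (adj T *m T)).

Lemma frobsq_ge0 (T : 'M[C]_n) : 0 <= frobsq T.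
Proof.
apply/Re_ge0/sumr_ge0 => k _; rewrite mxE; apply: sumr_ge0 => l _.
by rewrite !mxE -normCKC exprn_ge0.
Qed.

Definition cross (F G : seqv) i j : C := inner (G j) (G i) * inner (F i) (F j).
Definition weight (F G : seqv) i : R := normsq (G i) * normsq (F i).

Lemma weight_ge0 (F G : seqv) i : 0 <= weight F G i.
Proof. by rewrite mulr_ge0 ?normsq_ge0. Qed.

Lemma cross_diag (F G : seqv) i : cross F G i i = (weight F G i)%:C%C.
Proof. by rewrite /cross !inner_selfE -rmorphM. Qed.

Lemma Re_cross_sym (F G : seqv) i j :
  complex.Re (cross F G j i) = complex.Re (cross F G i j).
Proof. by rewrite -Re_conj /cross rmorphM /= !conj_inner mulrC. Qed.

Lemma frobsq_erasure (L : {set 'I_N}) (F G : seqv) :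
  frobsq (erasure L F G) = \sum_(i in L) \sum_(j in L) complex.Re (cross F G i j).
Proof.
have tr_sum (I : finType) (P : pred I) (M : I -> 'M[C]_n) :
    \tr (\sum_(i | P i) M i) = \sum_(i | P i) \tr (M i) by exact: raddf_sum.
rewrite /frobsq /erasure adj_sum mulmx_suml tr_sum Re_sum; apply: eq_bigr => i _.
rewrite mulmx_sumr tr_sum Re_sum; apply: eq_bigr => j _.
rewrite adj_mul adjK -mulmxA (mulmxA (adj (G i))) adj_mul_vec mul_scalar_mx.
by rewrite -scalemxAr mxtraceZ mxtrace_mul_adj.
Qed.

Lemma frobsq_erasure1 (F G : seqv) i : frobsq (erasure [set i] F G) = weight F G i.
Proof. by rewrite frobsq_erasure !big_set1 cross_diag. Qed.

Lemma frobsq_erasure2 (F G : seqv) i j : i != j ->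
  frobsq (erasure [set i; j] F G)
    = weight F G i + weight F G j + 2 * complex.Re (cross F G i j).
Proof.
move=> ij; have pair (f : 'I_N -> R) : \sum_(k in [set i; j]) f k = f i + f j.
  by rewrite big_setU1 ?big_set1 // in_set1.
by rewrite frobsq_erasure !pair !cross_diag (Re_cross_sym F G i j) /=; ring.
Qed.

Lemma frobE (T : 'M[C]_n) : frob T = Num.sqrt (frobsq T).
Proof. by []. Qed.

Lemma eps_ge0 m (F G : seqv) : 0 <= eps m F G.
Proof.
by apply: (big_ind (>= 0)) => // [x y x0 y0|L _]; rewrite ?le_max ?x0 ?sqrtr_ge0.
Qed.

Lemma frob_le_eps (L : {set 'I_N}) (F G : seqv) : frob (erasure L F G) <= eps #|L| F G.
Proof. exact: (le_bigmax_cond _ (fun L => frob (erasure L F G))). Qed.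

Lemma frob_erasure2_le_eps2 (F G : seqv) i j : i != j ->
  frob (erasure [set i; j] F G) <= eps 2 F G.
Proof. by move=> ij; have := frob_le_eps [set i; j] F G; rewrite cards2 ij. Qed.

Lemma eps_le m (F G : seqv) (x : R) : 0 <= x ->
  (forall L : {set 'I_N}, #|L| = m -> frob (erasure L F G) <= x) -> eps m F G <= x.
Proof. by move=> x0 Lx; apply: bigmax_le => // L /eqP; apply: Lx. Qed.

Lemma sqrt_weight_le_eps1 (F G : seqv) i : Num.sqrt (weight F G i) <= eps 1 F G.
Proof. by rewrite -frobsq_erasure1 -(cards1 i) frob_le_eps. Qed.

Lemma eps1_le (F G : seqv) (x : R) : 0 <= x ->
  (forall i, Num.sqrt (weight F G i) <= x) -> eps 1 F G <= x.
Proof.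
by move=> x0 wx; apply: eps_le => // L /eqP /cards1P [i ->]; rewrite frobE frobsq_erasure1.
Qed.

End ErasureNorm.

Section Balanced.
Variables (R : realType) (n N : nat).
Local Notation C := R[i].
Local Notation vec := 'cV[C]_n.
Local Notation seqv := ('I_N -> vec).

Definition ratio : R := n%:R / N%:R.

Lemma ratio_ge0 : 0 <= ratio.
Proof. by rewrite divr_ge0 ?ler0n. Qed.

Lemma Re_inner_le_sqrt_weight (F G : seqv) i :
  complex.Re (inner (F i) (G i)) <= Num.sqrt (weight F G i).
Proof. by rewrite /weight mulrC Re_inner_le. Qed.

Lemma ratio_le_eps1 (F G : seqv) : is_dual F G -> ratio <= eps 1 F G.
Proof.
move=> FG; have [N0|N_gt0] := posnP N.
  by rewrite /ratio (_ : N%:R = 0) ?invr0 ?mulr0 ?eps_ge0 // N0.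
have sum_le : \sum_(i < N) complex.Re (inner (F i) (G i)) <= \sum_(i < N) eps 1 F G.
  apply: ler_sum => i _.
  exact: le_trans (Re_inner_le_sqrt_weight F G i) (sqrt_weight_le_eps1 F G i).
rewrite ler_pdivrMr ?ltr0n // -(sum_Re_inner_dual FG) mulrC mulr_natl.
by rewrite sumr_const card_ord in sum_le.
Qed.

Lemma eps1_le_ratio_weight (F G : seqv) :
  is_dual F G -> eps 1 F G <= ratio -> forall i, weight F G i = ratio ^+ 2.
Proof.
move=> FG e1 i.
have w_le j : Num.sqrt (weight F G j) <= ratio := le_trans (sqrt_weight_le_eps1 F G j) e1.
have N_gt0 : (0 < N)%N by case: N i {FG e1 w_le} => [[]|].
have Nr : ratio *+ N = n%:R by rewrite -[_ *+ N]mulr_natr divfK // pnatr_eq0 -lt0n.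
(* Re <f_j, g_j> <= sqrt (weight j) <= ratio, and the left-hand sides add up to n *)
have gap_ge0 j : true -> 0 <= ratio - Num.sqrt (weight F G j) by rewrite subr_ge0.
have gap0 : \sum_j (ratio - Num.sqrt (weight F G j)) = 0.
  apply/eqP; rewrite eq_le sumr_ge0 // andbT.
  rewrite sumrB sumr_const card_ord Nr -(sum_Re_inner_dual FG) subr_le0.
  by apply: ler_sum => j _; apply: Re_inner_le_sqrt_weight.
move/eqP: (psumr_eq0P gap_ge0 gap0 (i := i) isT); rewrite subr_eq0 => /eqP ->.
by rewrite sqr_sqrtr // weight_ge0.
Qed.

(* By [inF1P] below, these are exactly the pairs in F^(1). *)
Definition balanced (F G : seqv) := dual_pair F G /\ forall i, weight F G i = ratio ^+ 2.

Lemma balanced_eps1 (F G : seqv) : balanced F G -> eps 1 F G = ratio.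
Proof.
move=> [[_ FG] w_eq]; apply/eqP; rewrite eq_le ratio_le_eps1 // andbT.
by apply: eps1_le => [|i]; rewrite ?w_eq ?sqrtr_sqr ?ger0_norm ?ratio_ge0.
Qed.

Lemma offdiag_sum_balanced (F G : seqv) : balanced F G ->
  \sum_i \sum_(j | j != i) complex.Re (cross F G i j) = n%:R - ratio ^+ 2 *+ N.
Proof.
move=> [[_ FG] w_eq].
(* the erasure of all indices is the identity, whose squared Frobenius norm is n *)
have all_set (f : 'I_N -> R) : \sum_(i in [set: 'I_N]) f i = \sum_i f i.
  by apply: eq_bigl => i; rewrite in_setT.
have : frobsq (erasure [set: 'I_N] F G) = n%:R.
  rewrite /erasure (eq_bigl _ _ (in_setT (T := 'I_N))) dual_sum_adj // /frobsq adj1 mulmx1.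
  by rewrite mxtrace1 -(rmorph_nat (real_complex R)).
rewrite frobsq_erasure all_set => <-.
have -> : ratio ^+ 2 *+ N = \sum_(i < N) ratio ^+ 2 by rewrite sumr_const card_ord.
rewrite -sumrB; apply: eq_bigr => i _.
by rewrite all_set [in RHS](bigD1 i) //= cross_diag w_eq /= addrAC subrr add0r.
Qed.

Lemma Re_cross_le_eq (F G F1 G1 : seqv) (c : R) : balanced F G -> balanced F1 G1 ->
  (forall i j, i != j -> complex.Re (cross F G i j) = c) ->
  (forall i j, i != j -> complex.Re (cross F1 G1 i j) <= c) ->
  forall i j, i != j -> complex.Re (cross F1 G1 i j) = c.
Proof.
move=> FG F1G1 Fc F1c i j ij.
(* both pairs have the same off-diagonal sum, so the nonnegative gaps sum to 0 *)
have gap_ge0 k : true -> 0 <= \sum_(l | l != k) (c - complex.Re (cross F1 G1 k l)).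
  by move=> _; apply: sumr_ge0 => l lk; rewrite subr_ge0 F1c // eq_sym.
have gap0 : \sum_k \sum_(l | l != k) (c - complex.Re (cross F1 G1 k l)) = 0.
  rewrite (eq_bigr (fun k => \sum_(l | l != k) complex.Re (cross F G k l)
                          - \sum_(l | l != k) complex.Re (cross F1 G1 k l))).
    by rewrite sumrB !offdiag_sum_balanced // subrr.
  by move=> k _; rewrite -sumrB; apply: eq_bigr => l lk; rewrite Fc // eq_sym.
have gap_i_ge0 l : l != i -> 0 <= c - complex.Re (cross F1 G1 i l).
  by move=> li; rewrite subr_ge0 F1c // eq_sym.
have ji : j != i by rewrite eq_sym.
move/eqP: (psumr_eq0P gap_i_ge0 (psumr_eq0P gap_ge0 gap0 (i := i) isT) ji).
by rewrite subr_eq0 => /eqP ->.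
Qed.

Definition equi_balanced (F G : seqv) := balanced F G /\
  exists c : R, forall i j, i != j -> complex.Re (cross F G i j) = c.

Lemma equi_balanced_Re_cross (F G F1 G1 : seqv) :
  equi_balanced F G -> equi_balanced F1 G1 ->
  forall i j, complex.Re (cross F G i j) = complex.Re (cross F1 G1 i j).
Proof.
move=> [FG [c Fc]] [F1G1 [c1 F1c]] i j.
have [->|ij] := eqVneq i j; first by rewrite !cross_diag /= FG.2 F1G1.2.
have [c1_le|c_lt] := lerP c1 c.
  by rewrite Fc // (Re_cross_le_eq FG F1G1 Fc _ ij) // => k l kl; rewrite F1c.
have F_le k l : k != l -> complex.Re (cross F G k l) <= c1 by move=> kl; rewrite Fc // ltW.
by rewrite F1c // (Re_cross_le_eq F1G1 FG F1c F_le ij).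
Qed.

Lemma equi_balanced_eps m (F G F1 G1 : seqv) :
  equi_balanced F G -> equi_balanced F1 G1 -> eps m F G = eps m F1 G1.
Proof.
move=> FG F1G1; apply: eq_bigr => L _.
rewrite !frobE !frobsq_erasure; congr Num.sqrt.
by apply: eq_bigr => i _; apply: eq_bigr => j _; apply: equi_balanced_Re_cross.
Qed.

Lemma frobsq_erasure2_balanced (F G : seqv) i j : balanced F G -> i != j ->
  frobsq (erasure [set i; j] F G) = ratio ^+ 2 *+ 2 + 2 * complex.Re (cross F G i j).
Proof. by move=> [_ w_eq] ij; rewrite frobsq_erasure2 // !w_eq. Qed.

Lemma eps2_equi_balanced_le (F G : seqv) i j : equi_balanced F G -> i != j ->
  eps 2 F G <= frob (erasure [set i; j] F G).
Proof.
move=> [FG [c Fc]] ij; apply: eps_le => [|L /eqP /cards2P [k [l [kl ->]]]].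
  exact: sqrtr_ge0.
by rewrite !frobE !frobsq_erasure2_balanced // !Fc.
Qed.

Lemma exists_Re_cross_ge (F G F1 G1 : seqv) (c : R) : (1 < N)%N ->
  balanced F G -> balanced F1 G1 ->
  (forall i j, i != j -> complex.Re (cross F G i j) = c) ->
  exists i j, i != j /\ c <= complex.Re (cross F1 G1 i j).
Proof.
move=> N_gt1 FG F1G1 Fc.
pose i0 : 'I_N := Ordinal (ltnW N_gt1); pose j0 : 'I_N := Ordinal N_gt1.
have i0j0 : i0 != j0 by [].
have [/existsP [i /existsP [j /andP [ij c_le]]]|/existsPn none] :=
  boolP [exists i, exists j, (i != j) && (c <= complex.Re (cross F1 G1 i j))].
  by exists i, j.
have F1_le i j : i != j -> complex.Re (cross F1 G1 i j) <= c.
  by move=> ij; move/existsPn/(_ j): (none i); rewrite ij -ltNge => /ltW.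
by exists i0, j0; rewrite (Re_cross_le_eq FG F1G1 Fc F1_le i0j0).
Qed.

Lemma eps2_equi_balanced_min (F G F1 G1 : seqv) : (1 < N)%N ->
  equi_balanced F G -> balanced F1 G1 -> eps 2 F G <= eps 2 F1 G1.
Proof.
move=> N_gt1 /[dup] FGc [FG [c Fc]] F1G1.
have [i [j [ij c_le]]] := exists_Re_cross_ge N_gt1 FG F1G1 Fc.
apply: le_trans (eps2_equi_balanced_le FGc ij) _.
apply: le_trans (frob_erasure2_le_eps2 F1 G1 ij).
by rewrite !frobE ler_wsqrtr // !frobsq_erasure2_balanced // Fc // lerD2l ler_pM2l.
Qed.

Lemma eps2_le_equi_balanced (F G F1 G1 : seqv) :
  equi_balanced F G -> balanced F1 G1 -> eps 2 F1 G1 <= eps 2 F G -> equi_balanced F1 G1.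
Proof.
move=> /[dup] FGc [FG [c Fc]] F1G1 e2; split=> //; exists c.
apply: (Re_cross_le_eq FG F1G1 Fc) => i j ij.
have := le_trans (frob_erasure2_le_eps2 F1 G1 ij) e2.
move/le_trans/(_ (eps2_equi_balanced_le FGc ij)).
rewrite !frobE ler_sqrt ?frobsq_ge0 // !frobsq_erasure2_balanced // Fc //.
by rewrite lerD2l ler_pM2l.
Qed.
End Balanced.

Arguments ratio {R} n N.

Section FrameOperator.
Variables (R : realType) (n N : nat).
Local Notation C := R[i].
Local Notation vec := 'cV[C]_n.
Local Notation seqv := ('I_N -> vec).

Lemma inner_frame_op (F : seqv) (f : vec) :
  inner (frame_op F *m f) f = \sum_i `|inner f (F i)| ^+ 2.
Proof.
rewrite /frame_op mulmx_suml inner_suml; apply: eq_bigr => i _.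
by rewrite -mulmxA adj_mul_vec mul_mx_scalar innerZl normCK conj_inner.
Qed.

Lemma tightP (F : seqv) : tight F <-> exists2 a : R, 0 < a & frame_op F = (a%:C%C)%:M.
Proof.
split=> [[A [A_gt0 bounds]]|[a a_gt0 Fa]]; last first.
  exists a%:C%C; split=> [|f]; first by rewrite (ltcR 0).
  by split; rewrite vnorm_sqr -innerZl -mul_scalar_mx -Fa inner_frame_op.
have A_real : A = (complex.Re A)%:C%C by rewrite RRe_real ?gtr0_real.
exists (complex.Re A); first by rewrite -(ltcR 0) -A_real.
rewrite -A_real; apply/eqP; rewrite -subr_eq0; apply/eqP/mx_eq0_quadratic => f.
rewrite mulmxBl innerDl innerNl inner_frame_op mul_scalar_mx innerZl.
have [lb ub] := bounds f; rewrite vnorm_sqr in lb ub.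
by apply/eqP; rewrite subr_eq0 eq_le ub lb.
Qed.

Lemma tight_frame (F : seqv) : tight F -> is_frame F.
Proof. by move=> [A [A_gt0 bounds]]; exists A, A. Qed.
End FrameOperator.

Lemma prim_root_exists (R : realType) (N : nat) :
  (0 < N)%N -> exists z : R[i], N.-primitive_root z.
Proof.
move=> N_gt0; pose q : {poly R[i]} := 'X^N - 1.
have [rs q_rs] := closed_field_poly_normal q.
rewrite (monicP _) ?monicXnsubC // scale1r in q_rs.
have rs_roots : all N.-unity_root rs by apply/allP=> z; rewrite -root_prod_XsubC -q_rs.
have size_rs : (N < (size rs).+1)%N by rewrite -(size_prod_XsubC rs id) -q_rs size_XnsubC.
have [|z _ z_prim] := hasP (has_prim_root N_gt0 rs_roots _ size_rs); last by exists z.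
by rewrite -separable_prod_XsubC -q_rs separable_Xn_sub_1 // pnatr_eq0 -lt0n.
Qed.

Section HarmonicFrame.
Variables (R : realType) (n N : nat) (z : R[i]).
Hypotheses (nN : (n <= N)%N) (z_prim : N.-primitive_root z).
Local Notation C := R[i].
Local Notation vec := 'cV[C]_n.

Let N_gt0 : (0 < N)%N := prim_order_gt0 z_prim.
Let N_neq0 : (N%:R : C) != 0. Proof. by rewrite pnatr_eq0 -lt0n. Qed.
Let z_neq0 : z != 0. Proof. by rewrite (prim_root_eq0 z_prim) -lt0n. Qed.

Let norm_z : `|z| = 1.
Proof.
by apply/eqP; rewrite -(pexpr_eq1 N_gt0) // -normrX (prim_expr_order z_prim) normr1.
Qed.

Lemma conj_prim_rootX k : (z ^+ k)^* = (z ^+ k)^-1.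
Proof.
have z_conj : z^* = z^-1.
  by apply: (mulfI z_neq0); rewrite -normCK norm_z expr1n mulfV.
by rewrite rmorphXn /= z_conj exprVn.
Qed.

Definition harmonic_frame (i : 'I_N) : vec := \col_(k < n) z ^+ (i * k).
Local Notation hf := harmonic_frame.
Local Notation hg := (fun i => (N%:R : C)^-1 *: hf i).

Lemma harmonic_orthogonal (k l : 'I_n) :
  \sum_(i < N) z ^+ (i * k) * (z ^+ (i * l))^* = (k == l)%:R *+ N.
Proof.
(* a geometric sum in the N-th root of unity [w], which is 1 only for k = l *)
pose w := z ^+ k / z ^+ l.
rewrite (eq_bigr (fun i : 'I_N => w ^+ i)) => [|i _]; last first.
  by rewrite conj_prim_rootX /w exprMn exprVn -!exprM mulnC (mulnC l).
have [kl|kl] := eqVneq k l.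
  rewrite /w kl divff ?expf_neq0 //.
  by under eq_bigr do rewrite expr1n; rewrite sumr_const card_ord.
have w1 : w != 1.
  apply: contra kl; rewrite /w (can2_eq (divfK _) (mulfK _)) ?expf_neq0 // mul1r.
  by rewrite (eq_prim_root_expr z_prim) !modn_small ?(leq_trans (ltn_ord _) nN).
have wN : w ^+ N = 1.
  rewrite /w exprMn exprVn -!exprM mulnC (mulnC l) !exprM (prim_expr_order z_prim).
  by rewrite !expr1n invr1 mulr1.
have := subrX1 w N; rewrite wN subrr => /esym/eqP; rewrite mulf_eq0 subr_eq0 (negbTE w1).
by rewrite mul0rn => /eqP.
Qed.

Lemma harmonic_dual : is_dual hf hg.
Proof.
apply/is_dualE/matrixP => k l; rewrite summxE !mxE.
rewrite (eq_bigr (fun i : 'I_N => (N%:R)^-1 * (z ^+ (i * k) * (z ^+ (i * l))^*))).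
  rewrite -mulr_sumr harmonic_orthogonal.
  by case: (k == l); rewrite /= ?mulr1n ?mul0rn ?mulr0 ?mulVf.
move=> i _; rewrite !mxE big_ord1 !mxE rmorphM /= fmorphV /= rmorph_nat.
by rewrite mulrCA.
Qed.

Lemma harmonic_tight : tight hf.
Proof.
apply/tightP; exists N%:R; first by rewrite ltr0n.
rewrite rmorph_nat.
have := harmonic_dual; rewrite is_dualE /frame_op => hd.
rewrite -[N%:R]mulr1 -scale_scalar_mx -hd scaler_sumr; apply: eq_bigr => i _.
by rewrite adjZ fmorphV /= rmorph_nat -scalemxAr scalerA mulfV // scale1r.
Qed.

Lemma harmonic_balanced : balanced hf hg.
Proof.
split; first by split; [exact/tight_frame/harmonic_tight | exact: harmonic_dual].
have norm_hf i : inner (hf i) (hf i) = n%:R.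
  rewrite inner_self (eq_bigr (fun _ => 1)) ?sumr_const ?card_ord // => k _.
  by rewrite mxE normrX norm_z !expr1n.
move=> i; apply: (@complexI R); rewrite -cross_diag /cross innerZl innerZr norm_hf.
rewrite rmorphXn /= /ratio fmorph_div /= !rmorph_nat fmorphV /= rmorph_nat.
by field.
Qed.

End HarmonicFrame.

Lemma exists_balanced (R : realType) (n N : nat) : (n <= N)%N -> (0 < N)%N ->
  exists F G : 'I_N -> 'cV[R[i]]_n, balanced F G.
Proof.
move=> nN N_gt0; have [z z_prim] := prim_root_exists R N_gt0.
exists (harmonic_frame n z), (fun i => (N%:R)^-1 *: harmonic_frame n z i).
exact: harmonic_balanced.
Qed.

Section OptimalDualPairs.
Variables (R : realType) (n N : nat).
Hypothesis nN : (n <= N)%N.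
Local Notation seqv := ('I_N -> 'cV[R[i]]_n).

Lemma inF_mono m k (F G : seqv) : (k <= m)%N -> inF m F G -> inF k F G.
Proof.
elim: m => [|m IH]; first by rewrite leqn0 => /eqP ->.
by rewrite leq_eqVlt ltnS => /predU1P [-> //|km [FG _]]; apply: IH.
Qed.

Lemma inF1P (F G : seqv) : inF 1 F G <-> balanced F G.
Proof.
split=> [[FG opt]|FG]; last first.
  by split=> [|F1 G1 [_ F1G1]]; [case: FG | rewrite balanced_eps1 // ratio_le_eps1].
split=> // i; have N_gt0 : (0 < N)%N by case: N i {FG opt} => [[]|].
have [F0 [G0 F0G0]] := exists_balanced R nN N_gt0.
apply: (eps1_le_ratio_weight FG.2); rewrite -(balanced_eps1 F0G0).
by apply: opt; case: F0G0.
Qed.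

Lemma inF2_equi_balanced (F G F1 G1 : seqv) :
  equi_balanced F G -> inF 2 F1 G1 -> equi_balanced F1 G1.
Proof.
move=> FG [/inF1P F1G1 opt]; apply: (eps2_le_equi_balanced FG F1G1).
by apply/opt/inF1P; case: FG.
Qed.

Lemma equi_balanced_inF (F G : seqv) :
  equi_balanced F G -> forall m, (1 <= m <= N)%N -> inF m F G.
Proof.
move=> FG; elim=> [//|[_|m IH]]; first by move=> _; apply/inF1P; case: FG.
move=> /andP [_ mN]; have FG_m : inF m.+1 F G by apply: IH; rewrite /= ltnW.
split=> // F1 G1 F1G1; case: m {IH} mN FG_m F1G1 => [|m] mN FG_m F1G1.
  by apply: eps2_equi_balanced_min => //; apply/inF1P.
by rewrite (equi_balanced_eps _ FG (inF2_equi_balanced FG (inF_mono _ F1G1))).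
Qed.

Lemma inF_equi_balancedP (F G F' G' : seqv) : equi_balanced F' G' -> dual_pair F G ->
  (forall m, (1 <= m <= N)%N -> inF m F G) <-> equi_balanced F G.
Proof.
move=> F'G' FG; split=> [opt|]; last exact: equi_balanced_inF.
have [N_gt1|N_le1] := ltnP 1 N.
  by apply: inF2_equi_balanced F'G' (opt 2 _); rewrite N_gt1.
split; last first.
  have val0 (k : 'I_N) : val k = 0%N.
    by apply/eqP; rewrite -leqn0 -ltnS (leq_trans (ltn_ord k) N_le1).
  by exists 0 => i j; rewrite -val_eqE !val0.
split=> // i; have /inF1P [_ -> //] : inF 1 F G.
by apply: opt; rewrite leqnn (leq_ltn_trans (leq0n i) (ltn_ord i)).
Qed.
End OptimalDualPairs.

Section TightCanonicalDual.
Variables (R : realType) (n N : nat) (F : 'I_N -> 'cV[R[i]]_n) (a : R).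
Hypotheses (a_gt0 : 0 < a) (Fa : frame_op F = (a%:C%C)%:M).
Local Notation G := (canon_dual F).

Lemma canon_dualE i : G i = (a^-1)%:C%C *: F i.
Proof. by rewrite /canon_dual Fa invmx_scalar mul_scalar_mx fmorphV. Qed.

Lemma canon_dual_pair : dual_pair F G.
Proof.
split; first by apply/tight_frame/tightP; exists a.
apply/is_dualE; rewrite (eq_bigr (fun i => (a^-1)%:C%C *: (F i *m adj (F i)))) => [|i _].
  by rewrite -scaler_sumr -/(frame_op F) Fa scale_scalar_mx -rmorphM mulVf ?gt_eqF.
by rewrite canon_dualE adjZ conj_real_complex scalemxAr.
Qed.

Lemma inner_canon_dual i j : inner (F i) (G j) = (a^-1)%:C%C * inner (F i) (F j).
Proof. by rewrite canon_dualE innerZr conj_real_complex. Qed.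

Lemma cross_canon_dual i j : cross F G i j = inner (F i) (G j) * inner (F j) (G i).
Proof.
by rewrite /cross !inner_canon_dual !canon_dualE innerZl innerZr conj_real_complex; ring.
Qed.

Lemma cross_canon_dual_norm i j :
  cross F G i j = (a^-1)%:C%C ^+ 2 * `|inner (F i) (F j)| ^+ 2.
Proof.
rewrite cross_canon_dual !inner_canon_dual -(conj_inner (F i) (F j)).
by rewrite mulrACA -normCK -expr2.
Qed.

Lemma cross_canon_dual_ge0 i j : 0 <= cross F G i j.
Proof. by rewrite cross_canon_dual_norm mulr_ge0 ?exprn_ge0 // ler0c invr_ge0 ltW. Qed.

Lemma inner_canon_dual_diag i : inner (F i) (G i) = (a^-1 * normsq (F i))%:C%C.
Proof. by rewrite inner_canon_dual inner_selfE -rmorphM. Qed.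

Lemma weight_canon_dual i : weight F G i = (a^-1 * normsq (F i)) ^+ 2.
Proof.
apply: (@complexI R); rewrite -cross_diag cross_canon_dual inner_canon_dual_diag.
by rewrite -expr2 rmorphXn.
Qed.

Lemma canon_dual_one_uniformP : one_uniform F G <-> forall i, weight F G i = ratio n N ^+ 2.
Proof.
have diag_ge0 i : 0 <= a^-1 * normsq (F i) by rewrite mulr_ge0 ?normsq_ge0 ?invr_ge0 ?ltW.
split=> [[c Fc] i|w_eq].
  have N_gt0 : (0 < N)%N by case: N i {Fc} => [[]|].
  have c_ratio : complex.Re c = ratio n N.
    have := sum_Re_inner_dual canon_dual_pair.2.
    rewrite (eq_bigr _ (fun i _ => congr1 _ (Fc i))) sumr_const card_ord -[_ *+ N]mulr_natr.
    by rewrite /ratio => <-; rewrite mulfK // pnatr_eq0 -lt0n.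
  by rewrite weight_canon_dual -c_ratio -(Fc i) inner_canon_dual_diag.
exists (ratio n N)%:C%C => i; rewrite inner_canon_dual_diag.
rewrite -[a^-1 * _]ger0_norm // -sqrtr_sqr -weight_canon_dual w_eq.
by rewrite sqrtr_sqr ger0_norm ?ratio_ge0.
Qed.

Lemma canon_dual_equal_normP : equal_norm F <-> one_uniform F G.
Proof.
split=> [[c Fc]|[c Fc]].
  by exists ((a^-1)%:C%C * c ^+ 2) => i; rewrite inner_canon_dual -(Fc i) vnorm_sqr.
exists (sqrtC (a%:C%C * c)) => i.
by rewrite /vnorm -(Fc i) inner_canon_dual mulrA -rmorphM mulfV ?gt_eqF // rmorph1 mul1r.
Qed.

Lemma canon_dual_two_uniformP : two_uniform F G <-> equi_balanced F G.
Proof.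
rewrite /two_uniform canon_dual_one_uniformP.
split=> [[w_eq [c Fc]]|[[_ w_eq] [c Fc]]]; split.
- by split; [exact: canon_dual_pair | exact: w_eq].
- by exists (complex.Re c) => i j ij; rewrite cross_canon_dual Fc.
- exact: w_eq.
exists c%:C%C => i j ij; rewrite -cross_canon_dual -(Fc i j ij).
exact/esym/RRe_real/ger0_real/cross_canon_dual_ge0.
Qed.

Lemma canon_dual_two_uniform_equiangular : two_uniform F G <-> equiangular F.
Proof.
rewrite /two_uniform /equiangular -canon_dual_equal_normP.
have a_neq0 : (a^-1)%:C%C ^+ 2 != 0 :> R[i].
  by rewrite expf_neq0 // fmorph_eq0 invr_eq0 gt_eqF.
split=> [] [FG [c Fc]]; split=> //.
  exists (sqrtC (((a^-1)%:C%C ^+ 2)^-1 * c)) => i j ij.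
  by rewrite -(Fc i j ij) -cross_canon_dual cross_canon_dual_norm mulKf // sqrCK.
exists ((a^-1)%:C%C ^+ 2 * c ^+ 2) => i j ij.
by rewrite -cross_canon_dual cross_canon_dual_norm Fc.
Qed.
End TightCanonicalDual.

Theorem theorem3p6 (R : realType) (n N : nat) (F : 'I_N -> 'cV[R[i]]_n) :
  (n <= N)%N ->
  tight F ->
  (exists (F' G' : 'I_N -> 'cV[R[i]]_n) (c : R),
      inF 1 F' G' /\
      forall i j : 'I_N, i != j ->
        complex.Re (inner (G' i) (G' j) * inner (F' j) (F' i)) = c) ->
  ((forall m : nat, (1 <= m <= N)%N -> inF m F (canon_dual F)) <->
     two_uniform F (canon_dual F)) /\
  (two_uniform F (canon_dual F) <-> equiangular F).
Proof.
move=> nN /tightP [a a_gt0 Fa] [F' [G' [c [F'G'_opt F'G'_c]]]].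
have F'G' : equi_balanced F' G'.
  split; first exact/(inF1P nN).
  by exists c => i j ij; rewrite -Re_cross_sym /cross F'G'_c // eq_sym.
have opt_equi := inF_equi_balancedP nN F'G' (canon_dual_pair a_gt0 Fa).
have two_equi := canon_dual_two_uniformP a_gt0 Fa.
split; last exact: canon_dual_two_uniform_equiangular a_gt0 Fa.
by split=> [/opt_equi/two_equi | /two_equi/opt_equi].
Qed.
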